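(* Let $K\ge 2$, let $L_1,\dots,L_K:\mathbb{R}^d\to\mathbb{R}$ be twice differentiable, and let $\mu,\rho,\delta\ge 0$. Assume that every $L_k$ is $\mu$-smooth and $\rho$-Hessian Lipschitz. Let $\widehat{w}_1,\dots,\widehat{w}_{K-1}\in\mathbb{R}^d$ and let $H_1,\dots,H_{K-1}$ be symmetric $d\times d$ matrices with $\|H_k\|_2\le\mu$ and $\|H_k-\nabla^2L_k(\widehat{w}_k)\|_2\le\delta$ for all $k\in[K-1]$. Define \[ \widetilde{L}_{K-1}(w)=\sum_{k=1}^{K-1}\Big(L_k(\widehat{w}_k)+(w-\widehat{w}_k)^\top\nabla L_k(\widehat{w}_k)+\tfrac12(w-\widehat{w}_k)^\top H_k(w-\widehat{w}_k)\Big), \] $\widetilde{F}(w)=\frac1K\big(\widetilde{L}_{K-1}(w)+L_K(w)\big)$ and $F(w)=\frac1K\sum_{k=1}^K L_k(w)$. Let $w_0=\widehat{w}_{K-1}$ and $w_t=w_{t-1}-\eta\nabla\widetilde{F}(w_{t-1})$ for $t\ge1$, with step size $\eta>0$. Suppose that for some iteration $t\ge1$ and some $c>1$, \[ \|\nabla\widetilde{F}(w_{t-1})\|_2\ \ge\ \frac{c}{K}\sum_{k=1}^{K-1}\Big(\delta\|w_{t-1}-\widehat{w}_k\|_2+\rho\|w_{t-1}-\widehat{w}_k\|_2^2\Big), \] and that $\eta\le \frac{2(1-1/c)}{\mu}$. Then \[ F(w_t)\le F(w_{t-1})-\eta\Big(1-\frac1c-\frac{\mu\eta}{2}\Big)\|\nabla\widetilde{F}(w_{t-1})\|_2^2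 . \]
   Context: $\|\cdot\|_2$ denotes the Euclidean norm for vectors and the operator norm for matrices; $[N]=\{1,\dots,N\}$. A differentiable $f$ is $\mu$-smooth if $\|\nabla f(w)-\nabla f(w')\|_2\le\mu\|w-w'\|_2$ for all $w,w'$, and $\rho$-Hessian Lipschitz if $\|\nabla^2 f(w)-\nabla^2 f(w')\|_2\le\rho\|w-w'\|_2$ for all $w,w'$. The points $\widehat{w}_k$ represent the model parameters obtained at the end of task $k$ in continual learning, and $H_k$ an approximation of the Hessian of the $k$-th task loss there. *)

From HB Require Import structures.
From mathcomp Require Import all_boot all_order all_algebra.
From mathcomp Require Import all_classical all_reals all_analysis.
Set Implicit Arguments. Unset Strict Implicit. Unset Printing Implicit Defensive.
Import Order.TTheory GRing.Theory Num.Theory.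
Import numFieldNormedType.Exports.
Local Open Scope ring_scope.
Local Open Scope classical_set_scope.

Section Defs.
Variables (R : realType) (d : nat).

Definition dotv (u v : 'cV[R]_d) : R := (u^T *m v) 0 0.
Definition enorm (v : 'cV[R]_d) : R := Num.sqrt (\sum_i v i 0 ^+ 2).

Definition opnorm (A : 'M[R]_d) : R :=
  sup [set enorm (A *m v) | v in [set v : 'cV[R]_d | enorm v <= 1]].

Definition is_gradient (f : 'cV[R]_d -> R) (g : 'cV[R]_d -> 'cV[R]_d) : Prop :=
  forall w, differentiable f w /\ forall h, 'd f w h = dotv (g w) h.

Definition is_hessian (g : 'cV[R]_d -> 'cV[R]_d) (Hm : 'cV[R]_d -> 'M[R]_d) : Prop :=
  forall w, differentiable g w /\ forall h, 'd g w h = Hm w *m h.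

End Defs.

(* Summing the descent lemma
   over the K losses, the step v = - eta grad F~(x) from x = w_{t-1} satisfies
     F(x + v) <= F(x) + <grad F(x), v> + mu/2 |v|^2.
   Because the Hessian of L_k is rho-Lipschitz and delta-close to H_k at wh k, the
   gradient of the k-th model differs from grad L_k(x) by at most
   delta |x - wh k| + rho/2 |x - wh k|^2; by the lower bound assumed on |grad F~(x)|,
   the error <grad F(x) - grad F~(x), v> is therefore at most |grad F~(x)| |v| / c,
   so the step keeps all but a 1/c fraction of its first-order decrease. *)

From HB Require Import structures.
From mathcomp Require Import all_boot all_order all_algebra.
From mathcomp Require Import all_classical all_reals all_analysis.
From mathcomp Require Import ring lra.
Set Implicit Arguments. Unset Strict Implicit. Unset Printing Implicit Defensive.
Import Order.TTheory GRing.Theory Num.Theory.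
Import numFieldNormedType.Exports.
Local Open Scope ring_scope.

Section Euclidean.
Variables (R : realType) (d : nat).
Implicit Types (u v : 'cV[R]_d) (A : 'M[R]_d).

Lemma dotvE u v : dotv u v = \sum_i u i 0 * v i 0.
Proof. by rewrite /dotv !mxE; apply: eq_bigr => i _; rewrite mxE. Qed.

Lemma dotvC u v : dotv u v = dotv v u.
Proof. by rewrite !dotvE; apply: eq_bigr => i _; rewrite mulrC. Qed.

Lemma dotv0l v : dotv 0 v = 0.
Proof. by rewrite /dotv trmx0 mul0mx mxE. Qed.

Lemma dotv0r v : dotv v 0 = 0.
Proof. by rewrite dotvC dotv0l. Qed.

Lemma dotvDl u w v : dotv (u + w) v = dotv u v + dotv w v.
Proof. by rewrite /dotv linearD mulmxDl mxE. Qed.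

Lemma dotvZl k u v : dotv (k *: u) v = k * dotv u v.
Proof. by rewrite /dotv linearZ -scalemxAl mxE. Qed.

Lemma dotvNl u v : dotv (- u) v = - dotv u v.
Proof. by rewrite -scaleN1r dotvZl mulN1r. Qed.

Lemma dotvBl u w v : dotv (u - w) v = dotv u v - dotv w v.
Proof. by rewrite dotvDl dotvNl. Qed.

Lemma dotvDr u w v : dotv v (u + w) = dotv v u + dotv v w.
Proof. by rewrite !(dotvC v) dotvDl. Qed.

Lemma dotvZr k u v : dotv v (k *: u) = k * dotv v u.
Proof. by rewrite !(dotvC v) dotvZl. Qed.

Lemma dotv_mulmxl A u v : dotv (A *m u) v = dotv u (A^T *m v).
Proof. by rewrite /dotv trmx_mul mulmxA. Qed.

Lemma dotv_sym_mulmx A u v : A^T = A -> dotv u (A *m v) = dotv (A *m u) v.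
Proof. by move=> symA; rewrite dotv_mulmxl symA. Qed.

Lemma sum_sqr_ge0 v : 0 <= \sum_i v i 0 ^+ 2.
Proof. by apply: sumr_ge0 => i _; rewrite sqr_ge0. Qed.

Lemma enorm_ge0 v : 0 <= enorm v.
Proof. exact: sqrtr_ge0. Qed.

Lemma sqr_enorm v : enorm v ^+ 2 = \sum_i v i 0 ^+ 2.
Proof. by rewrite sqr_sqrtr ?sum_sqr_ge0. Qed.

Lemma dotvv v : dotv v v = enorm v ^+ 2.
Proof. by rewrite sqr_enorm dotvE; apply: eq_bigr => i _; rewrite expr2. Qed.

Lemma enormZ k v : enorm (k *: v) = `|k| * enorm v.
Proof.
rewrite /enorm (eq_bigr (fun i => k ^+ 2 * v i 0 ^+ 2)); last first.
  by move=> i _; rewrite mxE exprMn.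
by rewrite -mulr_sumr sqrtrM ?sqr_ge0 // sqrtr_sqr.
Qed.

Lemma enormN v : enorm (- v) = enorm v.
Proof. by rewrite -scaleN1r enormZ normrN normr1 mul1r. Qed.

Lemma enorm_eq0 v : (enorm v == 0) = (v == 0).
Proof.
apply/idP/eqP => [|->]; last by rewrite /enorm big1 ?sqrtr0 // => i _; rewrite mxE expr0n.
rewrite sqrtr_eq0 => sum_le0.
have /psumr_eq0P sum0 : \sum_i v i 0 ^+ 2 = 0 by apply/le_anti; rewrite sum_le0 sum_sqr_ge0.
apply/matrixP => i j; rewrite ord1 mxE.
by apply/eqP; rewrite -sqrf_eq0; apply/eqP/sum0 => // l _; rewrite sqr_ge0.
Qed.

Lemma enorm0 : enorm (0 : 'cV[R]_d) = 0.
Proof. by apply/eqP; rewrite enorm_eq0. Qed.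

Lemma dotv_le_enorm u v : dotv u v <= enorm u * enorm v.
Proof.
set a := enorm u; set b := enorm v.
have scaled_le : 2 * (a * b) * dotv u v <= 2 * (a * b) * (a * b).
  have -> : 2 * (a * b) * (a * b) =
      b ^+ 2 * \sum_i u i 0 ^+ 2 + a ^+ 2 * \sum_i v i 0 ^+ 2 by rewrite -!sqr_enorm /a /b; ring.
  rewrite dotvE !mulr_sumr -big_split /=; apply: ler_sum => i _.
  have := sqr_ge0 (b * u i 0 - a * v i 0); nra.
have [ab_gt0|] := ltP 0 (a * b).
  by rewrite -(ler_pM2l (_ : 0 < 2 * (a * b))) // mulr_gt0.
move=> ab_le0.
have /eqP : a * b = 0 by apply/le_anti; rewrite ab_le0 mulr_ge0 ?enorm_ge0.
rewrite mulf_eq0 !enorm_eq0 => /orP[] /eqP ->; by rewrite ?dotv0l ?dotv0r mulr_ge0 ?enorm_ge0.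
Qed.

Lemma dotv_ge_enorm u v : - (enorm u * enorm v) <= dotv u v.
Proof. by rewrite lerNl -dotvNl -(enormN u) dotv_le_enorm. Qed.

Lemma sqr_dotv_le u v : dotv u v ^+ 2 <= enorm u ^+ 2 * enorm v ^+ 2.
Proof.
have := dotv_le_enorm u v; have := dotv_ge_enorm u v.
have := mulr_ge0 (enorm_ge0 u) (enorm_ge0 v); rewrite -exprMn; nra.
Qed.

Lemma enorm_mulmx_le_frobenius A v :
  enorm (A *m v) <= Num.sqrt (\sum_i \sum_j A i j ^+ 2) * enorm v.
Proof.
have frob_ge0 : 0 <= \sum_i \sum_j A i j ^+ 2.
  by apply: sumr_ge0 => i _; apply: sumr_ge0 => j _; rewrite sqr_ge0.
rewrite /enorm -sqrtrM // ler_sqrt ?mulr_ge0 ?sum_sqr_ge0 // mulr_suml.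
apply: ler_sum => i _.
have -> : (A *m v) i 0 = dotv (row i A)^T v.
  by rewrite dotvE mxE; apply: eq_bigr => j _; rewrite !mxE.
have -> : \sum_j A i j ^+ 2 = enorm (row i A)^T ^+ 2.
  by rewrite sqr_enorm; apply: eq_bigr => j _; rewrite !mxE.
by rewrite -sqr_enorm sqr_dotv_le.
Qed.

Lemma enorm_mulmx_le A v : enorm (A *m v) <= opnorm A * enorm v.
Proof.
have le_opnorm y : enorm y <= 1 -> enorm (A *m y) <= opnorm A.
  move=> y_le1; apply: ub_le_sup; last by exists y.
  exists (Num.sqrt (\sum_i \sum_j A i j ^+ 2)) => _ [z /= z_le1 <-].
  apply: le_trans (enorm_mulmx_le_frobenius A z) _.
  by rewrite -[leRHS]mulr1 ler_wpM2l ?sqrtr_ge0.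
have [/eqP|v_neq0] := eqVneq (enorm v) 0.
  by rewrite enorm_eq0 => /eqP ->; rewrite mulmx0 enorm0 mulr0.
have v_gt0 : 0 < enorm v by rewrite lt_neqAle eq_sym v_neq0 enorm_ge0.
have := le_opnorm ((enorm v)^-1 *: v).
rewrite -scalemxAr !enormZ ger0_norm ?invr_ge0 ?enorm_ge0 // mulVf // lexx.
by rewrite ler_pdivrMl // mulrC => /(_ isT).
Qed.

End Euclidean.

Section RealDerivatives.
Variable R : realType.

Lemma is_derive_line (V W : normedModType R) (f : V -> W) a b s :
  differentiable f (s *: b + a) ->
  is_derive s 1 (fun r : R => f (r *: b + a)) ('d f (s *: b + a) b).
Proof.
move=> df.
have quotE : (fun h : R => h^-1 *: (((fun r => f (r *: b + a)) \o shift s) (h *: 1)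
                                   - f (s *: b + a)))
    = (fun h : R => h^-1 *: ((f \o shift (s *: b + a)) (h *: b) - f (s *: b + a))).
  apply/funext => h /=; congr (_ *: (f _ - _)).
  by rewrite [h *: 1]mulr1 scalerDl addrA.
have dv := @diff_derivable _ _ _ _ _ b df.
apply: DeriveDef; first by rewrite /derivable quotE.
by rewrite /derive quotE -(deriveE b df).
Qed.

Lemma is_derive_quadratic (A B C s : R) :
  is_derive s 1 (fun r : R => A + r * B + r ^+ 2 * C) (B + 2 * s * C).
Proof.
rewrite (_ : (fun r => _) = cst A + id * cst B + id ^+ 2 * cst C) //.
have := is_deriveD (is_deriveD (is_derive_cst A s 1)
  (is_deriveM (is_derive_id s 1) (is_derive_cst B s 1)))
  (is_deriveM (is_deriveX 2 (is_derive_id s 1)) (is_derive_cst C s 1)).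
move=> /is_derive_eq; apply.
by rewrite /= !scaler0 !add0r /GRing.scale /= !mulr1; ring.
Qed.

Lemma is_derive_sum_nat (V W : normedModType R) m n (h : nat -> V -> W) dh x v :
  (forall k, (m <= k < n)%N -> is_derive x v (h k) (dh k)) ->
  is_derive x v (fun y => \sum_(m <= k < n) h k y) (\sum_(m <= k < n) dh k).
Proof.
elim: n => [|n IHn] dh_k.
  by under eq_fun do rewrite big_geq //; rewrite big_geq //; apply: is_derive_cst.
have [mn|nm] := leqP m n; last first.
  by under eq_fun do rewrite big_geq //; rewrite big_geq //; apply: is_derive_cst.
under eq_fun do rewrite big_nat_recr //=; rewrite big_nat_recr //=.
apply: is_deriveD; last by apply: dh_k; rewrite mn leqnn.
by apply: IHn => k /andP[mk kn]; apply: dh_k; rewrite mk ltnW.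
Qed.

Lemma taylor_remainder_le (phi dphi : R -> R) (M : R) :
  (forall s : R, is_derive s 1 phi (dphi s)) ->
  (forall s, 0 < s < 1 -> dphi s - dphi 0 <= M * s) ->
  phi 1 - phi 0 - dphi 0 <= M / 2.
Proof.
move=> dphiE dphi_le.
pose psi x := phi x + (0 + x * - dphi 0 + x ^+ 2 * - (M / 2)).
have dpsi (s : R) : is_derive s 1 psi (dphi s - dphi 0 - M * s).
  move: (is_deriveD (dphiE s) (is_derive_quadratic 0 (- dphi 0) (- (M / 2)) s)).
  by move=> /is_derive_eq; apply; field.
have psi_cont : {within `[0, 1], continuous psi}%classic.
  by apply: derivable_within_continuous => x _; have [] := dpsi x.
have [c /[!in_itv] /= c01] := MVT ltr01 (fun x _ => dpsi x) psi_cont.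
have := dphi_le c c01; rewrite /psi; lra.
Qed.

End RealDerivatives.

Section GradientHessian.
Variables (R : realType) (d : nat).
Implicit Types (x v : 'cV[R]_d).

Lemma is_derive_line_gradient (f : 'cV[R]_d -> R) g x v (s : R) :
  is_gradient f g ->
  is_derive s 1 (fun r : R => f (r *: v + x)) (dotv (g (s *: v + x)) v).
Proof. by move=> gradf; have [df <-] := gradf (s *: v + x); apply: is_derive_line. Qed.

Lemma gradient_dotv_eq (f : 'cV[R]_d -> R) g x v (D : R) :
  is_gradient f g -> is_derive (0 : R) 1 (fun r : R => f (r *: v + x)) D -> dotv (g x) v = D.
Proof.
move=> gradf dD; have := is_derive_line_gradient x v 0 gradf.
rewrite scale0r add0r => dg.
by rewrite -(@derive_val _ _ _ _ _ _ _ dg) (@derive_val _ _ _ _ _ _ _ dD).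
Qed.

Lemma is_derive_line_hessian g Hg x v u (s : R) :
  is_hessian g Hg ->
  is_derive s 1 (fun r : R => dotv (g (r *: v + x)) u) (dotv (Hg (s *: v + x) *m v) u).
Proof.
move=> hessg; have [dg dgE] := hessg (s *: v + x).
have := is_derive_line dg; rewrite dgE.
set gamma := (fun r : R => g (r *: v + x)) => dgamma.
have dv : derivable gamma s 1 by case: dgamma.
have dgamma_i i : is_derive s 1 (fun r => gamma r i 0) ((Hg (s *: v + x) *m v) i 0).
  apply: DeriveDef; first exact: (derivable_mxP gamma s 1).1 dv i 0.
  by rewrite -(@derive_val _ _ _ _ _ _ _ dgamma) (derive_mx dv) mxE.
rewrite (_ : (fun r => _) = \sum_(i < d) (u i 0 \*: (fun r => gamma r i 0))); last first.
  by rewrite fct_sumE; apply/funext => r; rewrite dotvE; apply: eq_bigr => i _; rewrite mulrC.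
move: (is_derive_sum (fun i => is_deriveZ (u i 0) (dgamma_i i))) => /is_derive_eq; apply.
by rewrite dotvE; apply: eq_bigr => i _; rewrite mulrC.
Qed.

Lemma descent_lemma (f : 'cV[R]_d -> R) g (mu : R) x v :
  is_gradient f g -> (forall y z, enorm (g y - g z) <= mu * enorm (y - z)) ->
  f (x + v) <= f x + dotv (g x) v + mu / 2 * enorm v ^+ 2.
Proof.
move=> gradf g_lip.
have : f (x + v) - f x - dotv (g x) v <= mu * enorm v ^+ 2 / 2.
  have := taylor_remainder_le (M := mu * enorm v ^+ 2)
    (fun s => is_derive_line_gradient x v s gradf).
  rewrite scale1r scale0r add0r [v + x]addrC; apply=> s /andP[s_gt0 _].
  rewrite -dotvBl (le_trans (dotv_le_enorm _ _)) //.
  apply: le_trans (ler_wpM2r (enorm_ge0 _) (g_lip _ _)) _.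
  by rewrite addrK enormZ (ger0_norm (ltW s_gt0)); lra.
lra.
Qed.

Lemma gradient_linearization_le g Hg (rho delta : R) a p v (H0 : 'M[R]_d) :
  is_hessian g Hg -> (forall y z, opnorm (Hg y - Hg z) <= rho * enorm (y - z)) ->
  opnorm (H0 - Hg a) <= delta ->
  dotv (g (a + p) - g a - H0 *m p) v <=
    (delta * enorm p + rho / 2 * enorm p ^+ 2) * enorm v.
Proof.
move=> hessg Hg_lip H0_near.
have : dotv (g (a + p)) v - dotv (g a) v - dotv (Hg a *m p) v <=
    rho * enorm p ^+ 2 * enorm v / 2.
  have := taylor_remainder_le (M := rho * enorm p ^+ 2 * enorm v)
    (fun s => is_derive_line_hessian a p v s hessg).
  rewrite scale1r scale0r add0r [p + a]addrC; apply=> s /andP[s_gt0 _].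
  rewrite -dotvBl -mulmxBl (le_trans (dotv_le_enorm _ _)) //.
  apply: le_trans (ler_wpM2r (enorm_ge0 _) (enorm_mulmx_le _ _)) _.
  apply: le_trans (ler_wpM2r (enorm_ge0 _) (ler_wpM2r (enorm_ge0 _) (Hg_lip _ _))) _.
  by rewrite addrK enormZ (ger0_norm (ltW s_gt0)); lra.
have := dotv_ge_enorm ((H0 - Hg a) *m p) v.
have : enorm ((H0 - Hg a) *m p) * enorm v <= delta * enorm p * enorm v.
  apply: (ler_wpM2r (enorm_ge0 _)).
  exact: le_trans (enorm_mulmx_le _ _) (ler_wpM2r (enorm_ge0 _) H0_near).
rewrite mulmxBl !dotvBl; lra.
Qed.

Definition quad_model (l : R) (g0 : 'cV[R]_d) (H0 : 'M[R]_d) (a x : 'cV[R]_d) : R :=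
  l + dotv (x - a) g0 + 2^-1 * dotv (x - a) (H0 *m (x - a)).

Lemma is_derive_quad_model_line l g0 (H0 : 'M[R]_d) a x v :
  H0^T = H0 ->
  is_derive (0 : R) 1 (fun r : R => quad_model l g0 H0 a (r *: v + x))
    (dotv (g0 + H0 *m (x - a)) v).
Proof.
move=> symH0; set p := x - a.
rewrite (_ : (fun r => _) = fun r : R => quad_model l g0 H0 a x
    + r * dotv (g0 + H0 *m p) v + r ^+ 2 * (2^-1 * dotv v (H0 *m v))).
  move/is_derive_eq: (is_derive_quadratic (quad_model l g0 H0 a x)
    (dotv (g0 + H0 *m p) v) (2^-1 * dotv v (H0 *m v)) 0); apply.
  by rewrite mulr0 mul0r addr0.
apply/funext => r; rewrite /quad_model -/p (_ : r *: v + x - a = r *: v + p); last first.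
  by rewrite /p addrA.
have sym_pv : dotv p (H0 *m v) = dotv v (H0 *m p) by rewrite dotv_sym_mulmx // dotvC.
clearbody p; rewrite (dotvC (g0 + _)) mulmxDr -scalemxAr !dotvDl !dotvDr.
rewrite !dotvZl !dotvZr sym_pv (dotvC v g0); by field.
Qed.

End GradientHessian.

Section SurrogateGradientStep.
Variables (R : realType) (d K : nat).
Variables (L : nat -> 'cV[R]_d -> R) (gL : nat -> 'cV[R]_d -> 'cV[R]_d).
Variables (HL : nat -> 'cV[R]_d -> 'M[R]_d) (mu rho delta : R).
Variables (wh : nat -> 'cV[R]_d) (H : nat -> 'M[R]_d) (gFt : 'cV[R]_d -> 'cV[R]_d).

Hypothesis K_gt0 : (0 < K)%N.
Hypothesis rho_ge0 : 0 <= rho.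
Hypothesis L_grad : forall k, (1 <= k <= K)%N -> is_gradient (L k) (gL k).
Hypothesis gL_hess : forall k, (1 <= k <= K)%N -> is_hessian (gL k) (HL k).
Hypothesis gL_lip : forall k, (1 <= k <= K)%N ->
  forall y z, enorm (gL k y - gL k z) <= mu * enorm (y - z).
Hypothesis HL_lip : forall k, (1 <= k <= K)%N ->
  forall y z, opnorm (HL k y - HL k z) <= rho * enorm (y - z).
Hypothesis H_sym : forall k, (1 <= k < K)%N -> (H k)^T = H k.
Hypothesis H_near : forall k, (1 <= k < K)%N -> opnorm (H k - HL k (wh k)) <= delta.

Definition avg_loss x := K%:R^-1 * \sum_(1 <= k < K.+1) L k x.

Definition surrogate x := K%:R^-1 *
  (\sum_(1 <= k < K) quad_model (L k (wh k)) (gL k (wh k)) (H k) (wh k) x + L K x).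

Hypothesis gFt_grad : is_gradient surrogate gFt.

Lemma avg_loss_descent x v :
  avg_loss (x + v) <=
    avg_loss x + K%:R^-1 * \sum_(1 <= k < K.+1) dotv (gL k x) v + mu / 2 * enorm v ^+ 2.
Proof.
have K_neq0 : K%:R != 0 :> R by rewrite pnatr_eq0 -lt0n.
have -> : mu / 2 * enorm v ^+ 2 = K%:R^-1 * \sum_(1 <= k < K.+1) (mu / 2 * enorm v ^+ 2).
  by rewrite sumr_const_nat subSS subn0 -(mulr_natr (mu / 2 * _)) [RHS]mulrC mulfK.
rewrite /avg_loss -!mulrDr ler_wpM2l ?invr_ge0 ?ler0n // -!big_split /=.
apply: ler_sum_nat => k /andP[k_ge1 k_le].
by apply: descent_lemma; [apply: L_grad | apply: gL_lip]; rewrite k_ge1 -ltnS.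
Qed.

Lemma surrogate_gradient_dotv x v :
  dotv (gFt x) v = K%:R^-1 *
    (\sum_(1 <= k < K) dotv (gL k (wh k) + H k *m (x - wh k)) v + dotv (gL K x) v).
Proof.
apply: (gradient_dotv_eq gFt_grad).
have dLK := is_derive_line_gradient x v 0 (L_grad (_ : (1 <= K <= K)%N)).
rewrite scale0r add0r in dLK.
apply: is_deriveZ; apply: is_deriveD; last by apply: dLK; rewrite K_gt0 leqnn.
apply: is_derive_sum_nat => k /andP[k_ge1 k_lt].
by apply: is_derive_quad_model_line; apply: H_sym; rewrite k_ge1.
Qed.

Lemma gradient_error_le x v :
  K%:R^-1 * \sum_(1 <= k < K.+1) dotv (gL k x) v - dotv (gFt x) v <=
    K%:R^-1 * \sum_(1 <= k < K)
      (delta * enorm (x - wh k) + rho * enorm (x - wh k) ^+ 2) * enorm v.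
Proof.
rewrite surrogate_gradient_dotv big_nat_recr //= -mulrBr ler_wpM2l ?invr_ge0 ?ler0n //.
rewrite opprD addrACA addrN addr0 -sumrB; apply: ler_sum_nat => k /andP[k_ge1 k_lt].
have k_le : (1 <= k <= K)%N by rewrite k_ge1 ltnW.
have k_in : (1 <= k < K)%N by rewrite k_ge1.
have := gradient_linearization_le (x - wh k) v (gL_hess k_le) (HL_lip k_le) (H_near k_in).
rewrite [wh k + _]addrC subrK -addrA -opprD dotvBl => /le_trans; apply.
by rewrite ler_wpM2r ?enorm_ge0 // lerD2l ler_wpM2r ?sqr_ge0 // ler_pdivrMr // ler_peMr // ler1n.
Qed.
End SurrogateGradientStep.

Theorem theorem1 (R : realType) (d K : nat)
  (L : nat -> 'cV[R]_d -> R) (gL : nat -> 'cV[R]_d -> 'cV[R]_d)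
  (HL : nat -> 'cV[R]_d -> 'M[R]_d)
  (mu rho delta : R)
  (wh : nat -> 'cV[R]_d) (H : nat -> 'M[R]_d)
  (gFt : 'cV[R]_d -> 'cV[R]_d)
  (eta c : R) (w : nat -> 'cV[R]_d) (t : nat) :
  (2 <= K)%N ->
  0 <= mu -> 0 <= rho -> 0 <= delta ->
  (* L_1..L_K twice differentiable, gradients gL k, Hessians HL k *)
  (forall k, (1 <= k <= K)%N -> is_gradient (L k) (gL k) /\ is_hessian (gL k) (HL k)) ->
  (* mu-smooth *)
  (forall k, (1 <= k <= K)%N -> forall u v,
      enorm (gL k u - gL k v) <= mu * enorm (u - v)) ->
  (* rho-Hessian Lipschitz *)
  (forall k, (1 <= k <= K)%N -> forall u v,
      opnorm (HL k u - HL k v) <= rho * enorm (u - v)) ->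
  (* H_1..H_{K-1} symmetric approximations *)
  (forall k, (1 <= k <= K.-1)%N ->
      (H k)^T = H k /\ opnorm (H k) <= mu /\
      opnorm (H k - HL k (wh k)) <= delta) ->
  (* gFt is the gradient of F~ *)
  is_gradient
    (fun x => K%:R^-1 *
       ((\sum_(1 <= k < K) (L k (wh k) + dotv (x - wh k) (gL k (wh k))
            + 2^-1 * dotv (x - wh k) (H k *m (x - wh k)))) + L K x))
    gFt ->
  0 < eta ->
  w 0%N = wh K.-1 ->
  (forall s, w s.+1 = w s - eta *: gFt (w s)) ->
  (1 <= t)%N ->
  1 < c ->
  enorm (gFt (w t.-1)) >=
    c / K%:R * \sum_(1 <= k < K)
       (delta * enorm (w t.-1 - wh k) + rho * enorm (w t.-1 - wh k) ^+ 2) ->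
  eta <= 2 * (1 - c^-1) / mu ->
  let F := fun x => K%:R^-1 * \sum_(1 <= k < K.+1) L k x in
  F (w t) <= F (w t.-1) - eta * (1 - c^-1 - mu * eta / 2) * enorm (gFt (w t.-1)) ^+ 2.
Proof.
(* Of the hypotheses, [0 <= mu], [0 <= delta], [opnorm (H k) <= mu], the value of [w 0]
   and the step-size bound are not needed; the last one only makes the bound a decrease. *)
move=> K_ge2 _ rho_ge0 _ L_diff gL_lip HL_lip H_approx gFt_grad eta_gt0 _ wS t_ge1 c_gt1
  grad_large _ /=.
have K_gt0 : (0 < K)%N by apply: leq_trans K_ge2.
have idx k : (1 <= k < K)%N -> (1 <= k <= K.-1)%N.
  by case/andP=> k_ge1 k_lt; rewrite k_ge1 -ltnS prednK.
set x := w t.-1 in grad_large *; set g := gFt x in grad_large *.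
set G := enorm g in grad_large *.
have -> : w t = x + (- eta) *: g by rewrite -(prednK t_ge1) wS scaleNr.
have descent :=
  avg_loss_descent K_gt0 (fun k k_in => (L_diff k k_in).1) gL_lip x ((- eta) *: g).
have := gradient_error_le K_gt0 rho_ge0 (fun k k_in => (L_diff k k_in).1)
  (fun k k_in => (L_diff k k_in).2) HL_lip (fun k k_in => (H_approx k (idx k k_in)).1)
  (fun k k_in => (H_approx k (idx k k_in)).2.2) gFt_grad x ((- eta) *: g).
rewrite -mulr_suml dotvZr dotvv enormZ normrN gtr0_norm // -/G => err.
set S := \sum_(1 <= k < K) _ in grad_large err.
have S_le : K%:R^-1 * S <= G / c.
  by rewrite ler_pdivlMr ?(lt_trans ltr01) // mulrC mulrA.
have := ler_wpM2r (mulr_ge0 (ltW eta_gt0) (enorm_ge0 g)) S_le.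
move: descent err; rewrite /avg_loss enormZ normrN gtr0_norm // -/G; lra.
Qed.
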